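(* Let $q$ be a prime number and $\mathbb{A}=\mathbb{Q}\cap\,]0,1[$. Then $\mathbb{A}\text{-}\mathcal{KS}(q^{2})=\emptyset$.
   Context: Every nonzero rational $\alpha$ is written $\alpha=\alpha_1/\alpha_2$ with $\alpha_1\in\mathbb{Z}$, $\alpha_2$ a positive integer and $\gcd(\alpha_1,\alpha_2)=1$. For an integer $N\ge 2$ and a nonzero rational $\alpha=\alpha_1/\alpha_2$, $N$ is called an $\alpha$-Korselt number if $N\neq\alpha$ and $\alpha_2p-\alpha_1$ divides $\alpha_2N-\alpha_1$ (in $\mathbb{Z}$) for every prime divisor $p$ of $N$. For a subset $\mathbb{A}\subseteq\mathbb{Q}$, $\mathbb{A}\text{-}\mathcal{KS}(N)$ denotes the set of all $\beta\in\mathbb{A}\setminus\{0,N\}$ such that $N$ is a $\beta$-Korselt number. $]0,1[$ denotes the open interval. *)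

From mathcomp Require Import all_boot all_order all_algebra.
Set Implicit Arguments. Unset Strict Implicit. Unset Printing Implicit Defensive.
Import Order.TTheory GRing.Theory Num.Theory.
Local Open Scope ring_scope.

(* A nonzero rational alpha = alpha1/alpha2 in lowest terms, alpha2 > 0:
   in mathcomp, alpha1 = numq alpha, alpha2 = denq alpha. *)

Definition korselt (alpha : rat) (N : nat) : Prop :=
  (2 <= N)%N /\ alpha != 0 /\ alpha != N%:R /\
  forall p : nat, prime p -> (p %| N)%N ->
    (denq alpha * p%:Z - numq alpha %| denq alpha * N%:Z - numq alpha)%Z.

Definition KS (A : rat -> Prop) (N : nat) (beta : rat) : Prop :=
  A beta /\ beta != 0 /\ beta != N%:R /\ korselt beta N.

Definition unit_open (beta : rat) : Prop := 0 < beta /\ beta < 1.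

(* Write beta = a/d with 0 < a < d. The Korselt condition at the prime q reads
   d q - a | d q^2 - a, and since d q^2 - a = q (d q - a) + a (q - 1) this
   means d q - a | a (q - 1). But 0 < a (q - 1) < d q - a, the gap being
   (d - a) q > 0, so no such divisibility is possible. *)
From mathcomp Require Import all_boot all_order all_algebra.
From mathcomp Require Import ring.
Import Order.TTheory GRing.Theory Num.Theory.
Local Open Scope ring_scope.

Lemma numq_lt_denq (x : rat) : (numq x < denq x) = (x < 1).
Proof.
by rewrite -[x in RHS]divq_num_den ltr_pdivrMr ?ltr0z // mul1r ltr_int.
Qed.

Lemma gtzNdvd (d m : int) : 0 < m < d -> ~~ (d %| m)%Z.
Proof.
case/andP=> m_gt0 lt_md; have d_gt0 := lt_trans m_gt0 lt_md.
by rewrite dvdzE gtnNdvd // -ltz_nat ?gtz0_abs.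
Qed.

Lemma dvdz_korselt_cofactor (a d p m : int) :
  (d * p - a %| d * (p * m) - a)%Z = (d * p - a %| a * (m - 1))%Z.
Proof.
have -> : d * (p * m) - a = (d * p - a) * m + a * (m - 1) by ring.
by rewrite rpredDl // dvdz_mulr.
Qed.

Lemma korselt_residue_bounds (a d p : int) :
  0 < a -> a < d -> 2 <= p -> 0 < a * (p - 1) < d * p - a.
Proof.
move=> a_gt0 lt_ad p_ge2; apply/andP; split; first by rewrite mulr_gt0 ?subr_gt0.
rewrite -subr_gt0 (_ : d * p - a - a * (p - 1) = (d - a) * p); last by ring.
by rewrite mulr_gt0 ?subr_gt0 // (lt_le_trans _ p_ge2).
Qed.

Theorem corollary5p6 (q : nat) (hq : prime q) :
  forall beta : rat, ~ KS unit_open (q ^ 2)%N beta.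
Proof.
move=> beta [[beta_gt0 beta_lt1] [_ [_ [_ [_ [_ korselt_beta]]]]]].
have := korselt_beta q hq (dvdn_exp (ltn0Sn 1) (dvdnn q)).
rewrite expnS expn1 PoszM dvdz_korselt_cofactor.
apply/negP/gtzNdvd.
apply: korselt_residue_bounds; rewrite ?numq_gt0 ?numq_lt_denq //.
by rewrite lez_nat prime_gt1.
Qed.
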